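(* Let $\mathcal{C}$ be a CD-category equipped with a normalisation structure $\mathrm{nrm}$ and with cancellative comparators $\nabla$. (i) If $\omega\colon I\to X$ is a state with full support, then $\mathrm{nrm}\big(\nabla_X\circ(\omega\otimes \mathrm{id}_X)\big)=\mathrm{id}_X$ as maps $X\to X$. (ii) More generally, if $c\colon X\to Y$ is a channel with full support, then $\mathrm{nrm}\big(\nabla_Y\circ(c\otimes \mathrm{id}_Y)\big)=\,!_X\otimes \mathrm{id}_Y$ as maps $X\otimes Y\to Y$.
   Context: A CD-category is a symmetric monoidal category (unit $I$) in which every object $X$ carries a copy map $\Delta_X\colon X\to X\otimes X$ and a discard map $!_X\colon X\to I$ forming a commutative comonoid, compatibly with $\otimes$. A map $f$ is a channel if $!\circ f=\,!$; a state is a map $I\to X$. The domain of $f\colon X\to Y$ is $\mathrm{dom}(f)=\,!_Y\circ f$; $g\colon X\to Y$ is a normalisation of $f$ if $f=(\mathrm{dom}(f)\otimes g)\circ\Delta_X$; $f$ is normalised if it is a normalisation of itself. A normalisation structure assigns to every $f\colon X\to Y$ a normalised map $\mathrm{nrm}(f)\colon X\to Y$ that is a normalisation of $f$, such that: $\mathrm{nrm}(f\otimes g)=\mathrm{nrm}(f)\otimes\mathrm{nrm}(g)$; $\mathrm{nrm}(h\circ f)=h\circ\mathrm{nrm}(f)$ for every channel $h$; discarders and copiers on inputs can be pulled out, i.e. $\mathrm{nrm}(f\circ(\mathrm{id}\otimes !))=\mathrm{nrm}(f)\circ(\mathrm{id}\otimes !)$ and $\mathrm{nrm}(f\circ\Delta)=\mathrm{nrm}(f)\circ\Delta$;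 and $\mathrm{nrm}(f)=f$ whenever $f$ is normalised. A comparator structure assigns to each $X$ a map $\nabla_X\colon X\otimes X\to X$ that is commutative, associative, compatible with $\otimes$, and satisfies the Frobenius/spider equations $\nabla\circ\Delta=\mathrm{id}$ and $(\nabla\otimes\mathrm{id})\circ(\mathrm{id}\otimes\Delta)=\Delta\circ\nabla=(\mathrm{id}\otimes\nabla)\circ(\Delta\otimes\mathrm{id})$. The cap is $\cap_X=\,!_X\circ\nabla_X\colon X\otimes X\to I$. Comparators are cancellative if for $f,g\colon A\to Y\otimes Z$, $(\cap_Y\otimes\mathrm{id}_Z)\circ(\mathrm{id}_Y\otimes f)=(\cap_Y\otimes\mathrm{id}_Z)\circ(\mathrm{id}_Y\otimes g)$ implies $f=g$. A map $f\colon X\to Y$ has full support if $\mathrm{nrm}\big(\cap_Y\circ(f\otimes\mathrm{id}_Y)\big)=\,!_{X\otimes Y}$ (a state is the case $X=I$). In the Kleisli category of the finite subdistribution monad (maps $X\to\mathcal{D}_{\le1}(Y)$, $\mathrm{nrm}$ = pointwise rescaling to total mass $1$, with the zero subdistribution sent to itself, $\nabla(x,x')=1|x\rangle$ if $x=x'$ and $0$ otherwise), full support of $f$ means $f(x)(y)>0$ for all $x,y$. *)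

(* The underlying symmetric monoidal category is NOT
   assumed strict: associators, unitors and the symmetry are explicit. *)

Set Implicit Arguments.
Unset Strict Implicit.

Record CDData := {
  ob : Type;
  hom : ob -> ob -> Type;
  idm : forall A, hom A A;
  comp : forall A B C, hom B C -> hom A B -> hom A C;
  tob : ob -> ob -> ob;
  unit : ob;
  tens : forall A B C D, hom A B -> hom C D -> hom (tob A C) (tob B D);
  assoc : forall A B C, hom (tob (tob A B) C) (tob A (tob B C));
  assoc_inv : forall A B C, hom (tob A (tob B C)) (tob (tob A B) C);
  lu : forall A, hom (tob unit A) A;
  lu_inv : forall A, hom A (tob unit A);
  ru : forall A, hom (tob A unit) A;
  ru_inv : forall A, hom A (tob A unit);
  braid : forall A B, hom (tob A B) (tob B A);
  copy : forall A, hom A (tob A A);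
  disc : forall A, hom A unit
}.

Arguments hom {c} _ _.
Arguments idm {c} A.
Arguments comp {c A B C} _ _.
Arguments tob {c} _ _.
Arguments unit {c}.
Arguments tens {c A B C D} _ _.
Arguments assoc {c} A B C.
Arguments assoc_inv {c} A B C.
Arguments lu {c} A.
Arguments lu_inv {c} A.
Arguments ru {c} A.
Arguments ru_inv {c} A.
Arguments braid {c} A B.
Arguments copy {c} A.
Arguments disc {c} A.

Declare Scope cd_scope.
Delimit Scope cd_scope with cd.
Open Scope cd_scope.
Notation "g ∘ f" := (comp g f) (at level 40, left associativity) : cd_scope.
Notation "f ⊗ g" := (tens f g) (at level 35, no associativity) : cd_scope.
Notation "A ⊠ B" := (tob A B) (at level 35, no associativity) : cd_scope.

Section CDLaws.
Variable C : CDData.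

Definition mid4 (A B D E : ob C) : hom ((A ⊠ B) ⊠ (D ⊠ E)) ((A ⊠ D) ⊠ (B ⊠ E)) :=
  assoc_inv A D (B ⊠ E)
  ∘ (idm A ⊗ (assoc D B E ∘ (braid B D ⊗ idm E) ∘ assoc_inv B D E))
  ∘ assoc A B (D ⊠ E).

Record is_CDCat : Prop := {
  comp_idl : forall (A B : ob C) (f : hom A B), idm B ∘ f = f;
  comp_idr : forall (A B : ob C) (f : hom A B), f ∘ idm A = f;
  comp_assoc : forall (A B D E : ob C) (f : hom A B) (g : hom B D) (h : hom D E),
      h ∘ (g ∘ f) = (h ∘ g) ∘ f;
  tens_id : forall A B : ob C, idm A ⊗ idm B = idm (A ⊠ B);
  tens_comp : forall (A1 A2 A3 B1 B2 B3 : ob C) (f : hom A1 A2) (g : hom A2 A3)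
      (f' : hom B1 B2) (g' : hom B2 B3),
      (g ∘ f) ⊗ (g' ∘ f') = (g ⊗ g') ∘ (f ⊗ f');
  assoc_iso1 : forall A B D : ob C, assoc_inv A B D ∘ assoc A B D = idm _;
  assoc_iso2 : forall A B D : ob C, assoc A B D ∘ assoc_inv A B D = idm _;
  lu_iso1 : forall A : ob C, lu_inv A ∘ lu A = idm _;
  lu_iso2 : forall A : ob C, lu A ∘ lu_inv A = idm _;
  ru_iso1 : forall A : ob C, ru_inv A ∘ ru A = idm _;
  ru_iso2 : forall A : ob C, ru A ∘ ru_inv A = idm _;
  braid_sym : forall A B : ob C, braid B A ∘ braid A B = idm _;
  assoc_nat : forall (A A' B B' D D' : ob C) (f : hom A A') (g : hom B B') (h : hom D D'),
      assoc A' B' D' ∘ ((f ⊗ g) ⊗ h) = (f ⊗ (g ⊗ h)) ∘ assoc A B D;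
  lu_nat : forall (A A' : ob C) (f : hom A A'), lu A' ∘ (idm unit ⊗ f) = f ∘ lu A;
  ru_nat : forall (A A' : ob C) (f : hom A A'), ru A' ∘ (f ⊗ idm unit) = f ∘ ru A;
  braid_nat : forall (A A' B B' : ob C) (f : hom A A') (g : hom B B'),
      braid A' B' ∘ (f ⊗ g) = (g ⊗ f) ∘ braid A B;
  pentagon : forall A B D E : ob C,
      (idm A ⊗ assoc B D E) ∘ assoc A (B ⊠ D) E ∘ (assoc A B D ⊗ idm E)
      = assoc A B (D ⊠ E) ∘ assoc (A ⊠ B) D E;
  triangle : forall A B : ob C,
      (idm A ⊗ lu B) ∘ assoc A unit B = ru A ⊗ idm B;
  hexagon : forall A B D : ob C,
      assoc B D A ∘ braid A (B ⊠ D) ∘ assoc A B D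
      = (idm B ⊗ braid A D) ∘ assoc B A D ∘ (braid A B ⊗ idm D);
  copy_coassoc : forall A : ob C,
      assoc A A A ∘ (copy A ⊗ idm A) ∘ copy A = (idm A ⊗ copy A) ∘ copy A;
  copy_counitl : forall A : ob C, lu A ∘ (disc A ⊗ idm A) ∘ copy A = idm A;
  copy_counitr : forall A : ob C, ru A ∘ (idm A ⊗ disc A) ∘ copy A = idm A;
  copy_cocomm : forall A : ob C, braid A A ∘ copy A = copy A;
  copy_tens : forall A B : ob C,
      copy (A ⊠ B) = mid4 A A B B ∘ (copy A ⊗ copy B);
  disc_tens : forall A B : ob C, disc (A ⊠ B) = lu unit ∘ (disc A ⊗ disc B);
  copy_unit : copy (@unit C) = lu_inv unit;
  disc_unit : disc (@unit C) = idm unit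
}.
End CDLaws.

Record CDCat := {
  cd_data :> CDData;
  cd_laws : is_CDCat cd_data
}.

Section Notions.
Variable C : CDCat.

Definition channel (X Y : ob C) (f : hom X Y) : Prop := disc Y ∘ f = disc X.

Definition dom (X Y : ob C) (f : hom X Y) : hom X unit := disc Y ∘ f.

Definition is_normalisation (X Y : ob C) (f g : hom X Y) : Prop :=
  f = lu Y ∘ (dom f ⊗ g) ∘ copy X.

Definition normalised (X Y : ob C) (f : hom X Y) : Prop := is_normalisation f f.

Record NrmStructure := {
  nrm : forall X Y : ob C, hom X Y -> hom X Y;
  nrm_normalised : forall X Y (f : hom X Y), normalised (nrm f);
  nrm_is_normalisation : forall X Y (f : hom X Y), is_normalisation f (nrm f);
  nrm_tens : forall X Y X' Y' (f : hom X Y) (g : hom X' Y'),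
      nrm (f ⊗ g) = nrm f ⊗ nrm g;
  nrm_channel : forall X Y Z (f : hom X Y) (h : hom Y Z),
      channel h -> nrm (h ∘ f) = h ∘ nrm f;
  nrm_disc_input : forall X Z Y (f : hom X Y),
      nrm (f ∘ ru X ∘ (idm X ⊗ disc Z)) = nrm f ∘ ru X ∘ (idm X ⊗ disc Z);
  nrm_copy_input : forall X Y (f : hom (X ⊠ X) Y),
      nrm (f ∘ copy X) = nrm f ∘ copy X;
  nrm_of_normalised : forall X Y (f : hom X Y), normalised f -> nrm f = f
}.

Record ComparatorStructure := {
  nabla : forall X : ob C, hom (X ⊠ X) X;
  nabla_comm : forall X, nabla X ∘ braid X X = nabla X;
  nabla_assoc : forall X,
      nabla X ∘ (nabla X ⊗ idm X) = nabla X ∘ (idm X ⊗ nabla X) ∘ assoc X X X;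
  nabla_tens : forall X Y,
      nabla (X ⊠ Y) = (nabla X ⊗ nabla Y) ∘ mid4 X Y X Y;
  nabla_copy : forall X, nabla X ∘ copy X = idm X;
  frobenius_l : forall X,
      (nabla X ⊗ idm X) ∘ assoc_inv X X X ∘ (idm X ⊗ copy X) = copy X ∘ nabla X;
  frobenius_r : forall X,
      copy X ∘ nabla X = (idm X ⊗ nabla X) ∘ assoc X X X ∘ (copy X ⊗ idm X)
}.

Definition cap (K : ComparatorStructure) (X : ob C) : hom (X ⊠ X) unit :=
  disc X ∘ nabla K X.

(* (∩_Y ⊗ id_Z) ∘ (id_Y ⊗ f) : Y⊗A -> Z, with the structural isos made explicit *)
Definition cap_apply (K : ComparatorStructure) (A Y Z : ob C) (f : hom A (Y ⊠ Z))
  : hom (Y ⊠ A) Z :=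
  lu Z ∘ (cap K Y ⊗ idm Z) ∘ assoc_inv Y Y Z ∘ (idm Y ⊗ f).

Definition cancellative (K : ComparatorStructure) : Prop :=
  forall (A Y Z : ob C) (f g : hom A (Y ⊠ Z)),
    cap_apply K f = cap_apply K g -> f = g.

(* full support:  nrm (∩_Y ∘ (f ⊗ id_Y)) = !_{X⊗Y} ; states are the case X = I *)
Definition full_support (N : NrmStructure) (K : ComparatorStructure)
  (X Y : ob C) (f : hom X Y) : Prop :=
  nrm N (cap K Y ∘ (f ⊗ idm Y)) = disc (X ⊠ Y).

End Notions.

Arguments nrm {C} n {X Y} _.
Arguments nabla {C} c X.


(* The Frobenius law rewrites  ∇ ∘ (c ⊗ id)  as  (∩ ∘ (c ⊗ id) ⊗ id) ∘ (id ⊗ Δ),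
   and monoidal coherence turns this into  ((∩ ∘ (c ⊗ id)) ⊗ π) ∘ Δ, where
   π = λ ∘ (! ⊗ id) is the second projection.  Since nrm commutes with channels,
   tensors and copiers on inputs, and π is a channel, the normalisation is
   (nrm (∩ ∘ (c ⊗ id)) ⊗ π) ∘ Δ = (! ⊗ π) ∘ Δ = π by full support. *)

Set Implicit Arguments.
Unset Strict Implicit.

Section CDCategory.
Variable C : CDCat.
Let L := cd_laws C.

Definition snd_proj (X Y : ob C) : hom (X ⊠ Y) Y := lu Y ∘ (disc X ⊗ idm Y).

Lemma compA (A B D E : ob C) (f : hom A B) (g : hom B D) (h : hom D E) :
  h ∘ (g ∘ f) = (h ∘ g) ∘ f.
Proof. apply (comp_assoc L). Qed.

Lemma comp1l (A B : ob C) (f : hom A B) : idm B ∘ f = f.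
Proof. apply (comp_idl L). Qed.

Lemma comp1r (A B : ob C) (f : hom A B) : f ∘ idm A = f.
Proof. apply (comp_idr L). Qed.

Lemma tensM (A1 A2 A3 B1 B2 B3 : ob C) (f : hom A1 A2) (g : hom A2 A3)
    (f' : hom B1 B2) (g' : hom B2 B3) :
  (g ∘ f) ⊗ (g' ∘ f') = (g ⊗ g') ∘ (f ⊗ f').
Proof. apply (tens_comp L). Qed.

Lemma tens1 (A B : ob C) : idm A ⊗ idm B = idm (A ⊠ B).
Proof. apply (tens_id L). Qed.

Lemma tens1M (A B D E : ob C) (g : hom D E) (h : hom B D) :
  idm A ⊗ (g ∘ h) = (idm A ⊗ g) ∘ (idm A ⊗ h).
Proof. rewrite <- tensM, comp1l. reflexivity. Qed.

Lemma tensM1 (A B D E : ob C) (g : hom D E) (h : hom B D) :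
  (g ∘ h) ⊗ idm A = (g ⊗ idm A) ∘ (h ⊗ idm A).
Proof. rewrite <- tensM, comp1l. reflexivity. Qed.

Lemma tens_factor_l (A B D E : ob C) (f : hom A B) (g : hom D E) :
  f ⊗ g = (f ⊗ idm E) ∘ (idm A ⊗ g).
Proof. rewrite <- tensM, comp1l, comp1r. reflexivity. Qed.

Lemma tens_factor_r (A B D E : ob C) (f : hom A B) (g : hom D E) :
  f ⊗ g = (idm B ⊗ g) ∘ (f ⊗ idm D).
Proof. rewrite <- tensM, comp1l, comp1r. reflexivity. Qed.

Lemma split_epi_cancel (A B D : ob C) (f g : hom B D) (u : hom A B) (v : hom B A) :
  u ∘ v = idm B -> f ∘ u = g ∘ u -> f = g.
Proof.
  intros Huv Heq.
  rewrite <- (comp1r f), <- (comp1r g), <- Huv, !compA, Heq. reflexivity.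
Qed.

Lemma split_mono_cancel (A B D : ob C) (f g : hom D A) (u : hom A B) (v : hom B A) :
  v ∘ u = idm A -> u ∘ f = u ∘ g -> f = g.
Proof.
  intros Hvu Heq.
  rewrite <- (comp1l f), <- (comp1l g), <- Hvu, <- !compA, Heq. reflexivity.
Qed.

Lemma assoc_inv_nat (A A' B B' D D' : ob C) (f : hom A A') (g : hom B B') (h : hom D D') :
  assoc_inv A' B' D' ∘ (f ⊗ (g ⊗ h)) = ((f ⊗ g) ⊗ h) ∘ assoc_inv A B D.
Proof.
  apply (split_mono_cancel (u := assoc A' B' D') (v := assoc_inv A' B' D')).
  - apply (assoc_iso1 L).
  - rewrite !compA, (assoc_iso2 L), comp1l, (assoc_nat L), <- compA,
      (assoc_iso2 L), comp1r.
    reflexivity.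
Qed.

Lemma tens_unit_l_inj (A B : ob C) (f g : hom A B) : idm unit ⊗ f = idm unit ⊗ g -> f = g.
Proof.
  intro H. apply (split_epi_cancel (u := lu A) (v := lu_inv A)).
  - apply (lu_iso2 L).
  - rewrite <- !(lu_nat L), H. reflexivity.
Qed.

Lemma tens_unit_r_inj (A B : ob C) (f g : hom A B) : f ⊗ idm unit = g ⊗ idm unit -> f = g.
Proof.
  intro H. apply (split_epi_cancel (u := ru A) (v := ru_inv A)).
  - apply (ru_iso2 L).
  - rewrite <- !(ru_nat L), H. reflexivity.
Qed.

(* Kelly's unitor coherences, which are not among the axioms. *)
Lemma lu_assoc (A B : ob C) : lu (A ⊠ B) ∘ assoc unit A B = lu A ⊗ idm B.
Proof.
  apply tens_unit_l_inj.
  apply (split_epi_cancel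
           (u := assoc unit (unit ⊠ A) B ∘ (assoc unit unit A ⊗ idm B))
           (v := (assoc_inv unit unit A ⊗ idm B) ∘ assoc_inv unit (unit ⊠ A) B)).
  - rewrite compA, <- (compA (assoc_inv unit unit A ⊗ idm B)), <- tensM,
      (assoc_iso2 L), comp1l, tens1, comp1r, (assoc_iso2 L).
    reflexivity.
  - rewrite tens1M, <- compA, (compA (assoc unit unit A ⊗ idm B)), (pentagon L),
      compA, (triangle L), <- tens1, <- (assoc_nat L), <- (triangle L), tensM1,
      compA, (assoc_nat L), compA.
    reflexivity.
Qed.

Lemma lu_braid (A : ob C) : lu A ∘ braid A unit = ru A.
Proof.
  apply tens_unit_r_inj.
  apply (split_mono_cancel (u := braid A unit) (v := braid unit A)).
  - apply (braid_sym L).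
  - pose proof (f_equal (fun k => lu (unit ⊠ A) ∘ k) (hexagon L A unit unit)) as Hhex.
    simpl in Hhex.
    rewrite !compA, lu_assoc, <- (braid_nat L), <- compA, (triangle L), (lu_nat L),
      <- (compA (assoc unit A unit)), lu_assoc, <- compA, <- tensM1 in Hhex.
    symmetry. exact Hhex.
Qed.

Lemma ru_braid (A : ob C) : ru A ∘ braid unit A = lu A.
Proof. rewrite <- lu_braid, <- compA, (braid_sym L), comp1r. reflexivity. Qed.

Lemma mid4_nat_inner (A B B' D E : ob C) (g : hom B B') :
  (idm (A ⊠ D) ⊗ (g ⊗ idm E)) ∘ mid4 A B D E
  = mid4 A B' D E ∘ ((idm A ⊗ g) ⊗ idm (D ⊠ E)).
Proof.
  unfold mid4.
  rewrite <- (tens1 A D), !compA, <- assoc_inv_nat, <- (compA (idm A ⊗ _)), <- tens1M,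
    !compA, <- (assoc_nat L), <- (compA (braid B D ⊗ idm E)), <- tensM1,
    <- (braid_nat L), tensM1, <- (compA (assoc_inv B D E)),
    <- (compA (assoc_inv B D E) ((g ⊗ idm D) ⊗ idm E)), <- assoc_inv_nat,
    (tens1 D E), !compA, tens1M, !compA, <- (compA (assoc A B (D ⊠ E))),
    <- (assoc_nat L), !compA.
  reflexivity.
Qed.

Lemma mid4_unit_l (X Y : ob C) :
  (idm (X ⊠ Y) ⊗ lu Y) ∘ mid4 X unit Y Y ∘ (ru_inv X ⊗ idm (Y ⊠ Y)) = assoc_inv X Y Y.
Proof.
  unfold mid4.
  rewrite <- (tens1 X Y), !compA, <- assoc_inv_nat, <- (compA (idm X ⊗ _)), <- tens1M,
    !compA, (triangle L), <- tensM1, ru_braid, <- lu_assoc,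
    <- (compA (assoc_inv unit Y Y)), (assoc_iso2 L), comp1r,
    <- (compA (assoc X unit (Y ⊠ Y))), (triangle L), <- compA, <- tensM,
    (ru_iso2 L), comp1l, tens1, comp1r.
  reflexivity.
Qed.

Lemma copy_disc_r (X : ob C) : (idm X ⊗ disc X) ∘ copy X = ru_inv X.
Proof.
  apply (split_mono_cancel (u := ru X) (v := ru_inv X)).
  - apply (ru_iso1 L).
  - rewrite compA, (copy_counitr L), (ru_iso2 L). reflexivity.
Qed.

Lemma copy_disc_l_tens (A B : ob C) (g : hom A B) : lu B ∘ (disc A ⊗ g) ∘ copy A = g.
Proof.
  rewrite (tens_factor_r (disc A) g), compA, (lu_nat L), <- !compA, (compA (copy A)),
    (copy_counitl L), comp1r.
  reflexivity.
Qed.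

Lemma effect_copy_snd (X Y : ob C) (h : hom (X ⊠ Y) unit) :
  lu Y ∘ (h ⊗ idm Y) ∘ assoc_inv X Y Y ∘ (idm X ⊗ copy Y)
  = lu Y ∘ (h ⊗ snd_proj X Y) ∘ copy (X ⊠ Y).
Proof.
  assert (Hsplit : h ⊗ snd_proj X Y
                   = (h ⊗ idm Y) ∘ (idm (X ⊠ Y) ⊗ lu Y)
                     ∘ (idm (X ⊠ Y) ⊗ (disc X ⊗ idm Y))).
  { unfold snd_proj. rewrite <- !tensM, comp1l, !comp1r. reflexivity. }
  rewrite Hsplit, (copy_tens L), !compA, <- (compA (mid4 X X Y Y)), mid4_nat_inner,
    !compA, <- (compA (copy X ⊗ copy Y) ((idm X ⊗ disc X) ⊗ idm (Y ⊠ Y))),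
    <- tensM, comp1l, copy_disc_r, (tens_factor_l (ru_inv X)), <- (mid4_unit_l X Y),
    !compA.
  reflexivity.
Qed.

Lemma channel_lu (Y : ob C) : channel (lu Y).
Proof. unfold channel. rewrite (disc_tens L), (disc_unit L), (lu_nat L). reflexivity. Qed.

Lemma channel_snd_proj (X Y : ob C) : channel (snd_proj X Y).
Proof.
  unfold channel, snd_proj.
  rewrite compA, (channel_lu Y), !(disc_tens L), (disc_unit L), <- compA, <- tensM,
    comp1l, comp1r.
  reflexivity.
Qed.

Variable K : ComparatorStructure C.

Lemma nabla_via_cap (X Y : ob C) (c : hom X Y) :
  nabla K Y ∘ (c ⊗ idm Y)
  = lu Y ∘ ((cap K Y ∘ (c ⊗ idm Y)) ⊗ idm Y) ∘ assoc_inv X Y Y ∘ (idm X ⊗ copy Y).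
Proof.
  unfold cap.
  rewrite !tensM1, !compA, <- (compA (assoc_inv X Y Y)), <- assoc_inv_nat, tens1,
    !compA, <- (compA (idm X ⊗ copy Y)), <- tens_factor_l, (tens_factor_r c (copy Y)).
  assert (Hcounit : nabla K Y ∘ (c ⊗ idm Y)
                    = lu Y ∘ (disc Y ⊗ idm Y) ∘ copy Y ∘ (nabla K Y ∘ (c ⊗ idm Y))).
  { rewrite (copy_counitl L), comp1l. reflexivity. }
  rewrite Hcounit, !compA, <- (compA (nabla K Y) (copy Y)), <- (frobenius_l K), !compA.
  reflexivity.
Qed.

Variable N : NrmStructure C.

Lemma nrm_id (X : ob C) : nrm N (idm X) = idm X.
Proof.
  apply nrm_of_normalised.
  unfold normalised, is_normalisation, dom.
  rewrite comp1r, (copy_counitl L). reflexivity.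
Qed.

Lemma nrm_of_channel (X Y : ob C) (h : hom X Y) : channel h -> nrm N h = h.
Proof.
  intro Hh. rewrite <- (comp1r h), (nrm_channel N (idm X) Hh), nrm_id. reflexivity.
Qed.

Lemma nrm_nabla_full_support (X Y : ob C) (c : hom X Y) :
  full_support N K c -> nrm N (nabla K Y ∘ (c ⊗ idm Y)) = snd_proj X Y.
Proof.
  unfold full_support. intro Hfull.
  rewrite nabla_via_cap, effect_copy_snd, <- compA, (nrm_channel N _ (channel_lu Y)),
    nrm_copy_input, nrm_tens, Hfull, (nrm_of_channel (channel_snd_proj X Y)), compA.
  apply copy_disc_l_tens.
Qed.

End CDCategory.

Theorem proposition4p3 (C : CDCat) (N : NrmStructure C)
    (K : ComparatorStructure C) (Hcanc : cancellative K) :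
  (forall (X : ob C) (omega : hom unit X),
      full_support N K omega ->
      nrm N (nabla K X ∘ (omega ⊗ idm X)) = lu X) /\
  (forall (X Y : ob C) (c : hom X Y),
      channel c -> full_support N K c ->
      nrm N (nabla K Y ∘ (c ⊗ idm Y)) = lu Y ∘ (disc X ⊗ idm Y)).
Proof.
  split.
  - intros X omega Hfull.
    rewrite (nrm_nabla_full_support Hfull). unfold snd_proj.
    rewrite (disc_unit (cd_laws C)), tens1, comp1r. reflexivity.
  - intros X Y c _ Hfull. apply (nrm_nabla_full_support Hfull).
Qed.
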